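(* Every W-cone is a W-state graph.
   Context: Graphs may have parallel edges but no loops. A half-edge $2$-colouring $c$ of $G$ assigns to each pair $(e,w)$ with $w$ an endpoint of edge $e$ a colour in $\{0,1\}$ (0 = blue, 1 = red). An edge $e=uv$ is bichromatic if $c(e,u)\neq c(e,v)$ and monochromatic otherwise; $E_b(G)$, $E_m(G)$ denote the bichromatic and monochromatic edge sets; standing convention: monochromatic edges are blue at both ends. A graph is matching-covered if every edge lies in some perfect matching. A W-state graph is a half-edge $2$-coloured matching-covered graph $(G,c)$ in which every perfect matching contains exactly one bichromatic edge, and every vertex $v$ is incident with an edge $e$ with $c(e,v)=1$. A W-cone is a half-edge $2$-coloured matching-covered graph $(G,c)$ containing a vertex $v$ adjacent to all other vertices (the apex) such that the set of edges incident with $v$ equals $E_b(G)$, $E(G-v)=E_m(G)$, and every vertex $u$ is incident with an edge $e$ with $c(e,u)=1$. *)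

(* A loopless multigraph is given by finite types V (vertices)
   and E (edges) with endpoint maps src tgt : E -> V and src e != tgt e.
   Parallel edges are allowed (distinct edges may share endpoints).
   A half-edge 2-colouring is c : E -> V -> bool, where c e w is the colour
   of the half-edge (e,w); only its values at endpoints w of e are ever used.
   Colour false = 0 = blue, true = 1 = red. *)
From mathcomp Require Import all_boot.
Set Implicit Arguments. Unset Strict Implicit. Unset Printing Implicit Defensive.

Section Graphs.
Variables (V E : finType) (src tgt : E -> V).

Definition incident (e : E) (w : V) : bool := (w == src e) || (w == tgt e).

Definition adjacent (u w : V) : bool :=
  [exists e, ((src e == u) && (tgt e == w)) || ((src e == w) && (tgt e == u))].

Definition perfect_matching (M : {set E}) : Prop :=
  forall x : V, #|[set e in M | incident e x]| = 1.

Definition matching_covered : Prop :=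
  forall e : E, exists M : {set E}, perfect_matching M /\ e \in M.

Variable c : E -> V -> bool.

Definition bichromatic (e : E) : bool := c e (src e) != c e (tgt e).
Definition monochromatic (e : E) : bool := c e (src e) == c e (tgt e).

Definition Eb : {set E} := [set e | bichromatic e].
Definition Em : {set E} := [set e | monochromatic e].

Definition mono_blue : Prop :=
  forall e : E, monochromatic e -> c e (src e) = false /\ c e (tgt e) = false.

Definition red_at_every_vertex : Prop :=
  forall v : V, exists e : E, incident e v /\ c e v = true.

Definition W_state_graph : Prop :=
  [/\ matching_covered,
      (forall M : {set E}, perfect_matching M -> #|M :&: Eb| = 1)
    & red_at_every_vertex].

Definition is_apex (v : V) : Prop :=
  [/\ (forall u : V, u != v -> adjacent v u),
      [set e | incident e v] = Eb
    & [set e | ~~ incident e v] = Em].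

Definition W_cone : Prop :=
  [/\ matching_covered, (exists v : V, is_apex v) & red_at_every_vertex].

End Graphs.

From mathcomp Require Import all_boot.

Lemma card_perfect_matching_star (V E : finType) (src tgt : E -> V)
    (M : {set E}) (x : V) :
  perfect_matching src tgt M -> #|M :&: [set e | incident src tgt e x]| = 1.
Proof.
by move=> PM; rewrite -(PM x); apply: eq_card => e; rewrite !inE.
Qed.

Theorem mainTheorem7 (V E : finType) (src tgt : E -> V)
    (noloop : forall e : E, src e != tgt e)
    (c : E -> V -> bool)
    (conv : mono_blue src tgt c) :
  W_cone src tgt c -> W_state_graph src tgt c.
Proof.
case=> covered [v [_ star_v_eq_Eb _]] red; split=> // M PM.
by rewrite -star_v_eq_Eb card_perfect_matching_star.
Qed.
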